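(* For $D\in\mathbb N$ let $\Pi_D$ be the law of $f=D^{-1/2}\sum_{j=1}^DZ_j\varphi_j$ and let $\mathbb H_D$ be its RKHS. Then for any $\epsilon>0$, any $f_0\in\mathcal S^\beta(L)$ and any $D\ge(L/\epsilon)^{d/\beta}$, \[\inf_{h\in\mathbb H_D:\|h-f_0\|\le\epsilon}\|h\|_{\mathbb H_D}^2\le D\|f_0\|^2.\]
   Context: $G$ is a probability distribution on $\mathcal X\subseteq\mathbb R^d$, $\|\cdot\|$ the norm of $L^2(\mathcal X,G)$, $(\varphi_j)_{j\in\mathbb N}$ an orthonormal basis of $L^2(\mathcal X,G)$, $Z_j$ i.i.d. $\mathcal N(0,1)$, $\beta>0$, $L>0$. $\mathcal S^\beta(L)=\{g\in L^2(\mathcal X,G):\sum_j j^{2\beta/d}\langle g,\varphi_j\rangle^2\le L^2\}$. The RKHS $\mathbb H_D$ is the span of $\varphi_1,\dots,\varphi_D$ with norm $\|h\|_{\mathbb H_D}^2=D\sum_{j=1}^D\langle h,\varphi_j\rangle^2$. *)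

From HB Require Import structures.
From mathcomp Require Import all_boot all_order all_algebra.
From mathcomp Require Import all_classical all_reals all_analysis.
Set Implicit Arguments. Unset Strict Implicit. Unset Printing Implicit Defensive.
Import Order.TTheory GRing.Theory Num.Theory.
Local Open Scope classical_set_scope.
Local Open Scope ring_scope.

Section L2.
Context {dT : measure_display} {T : measurableType dT} {R : realType}.
Variable G : probability T R.

Definition inL2 (f : T -> R) : Prop :=
  measurable_fun setT f /\ G.-integrable setT (fun x => ((f x) ^+ 2)%:E).

Definition l2inner (f g : T -> R) : R := \int[G]_(x in setT) (f x * g x).

Definition l2norm (f : T -> R) : R := Num.sqrt (l2inner f f).

(* (phi_j)_j is an orthonormal basis of L^2(X, G).
   Index shift: phi j here is the paper's phi_{j+1}. *)
Definition is_ONB (phi : nat -> T -> R) : Prop :=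
  [/\ forall j, inL2 (phi j),
      forall i j, l2inner (phi i) (phi j) = (i == j)%:R
    & forall g, inL2 g -> (forall j, l2inner g (phi j) = 0) -> l2norm g = 0].

Definition sobolev_ball (phi : nat -> T -> R) (d : nat) (beta L : R)
    (g : T -> R) : Prop :=
  inL2 g /\
  (\sum_(0 <= j <oo)
     (((j.+1)%:R `^ (2 * beta / d%:R)) * (l2inner g (phi j)) ^+ 2)%:E
   <= (L ^+ 2)%:E)%E.

(* RKHS H_D = span(phi_1, ..., phi_D) *)
Definition inHD (phi : nat -> T -> R) (D : nat) (h : T -> R) : Prop :=
  exists a : nat -> R, h = (fun x => \sum_(j < D) a j * phi j x).

Definition HDnorm2 (phi : nat -> T -> R) (D : nat) (h : T -> R) : R :=
  D%:R * \sum_(j < D) (l2inner h (phi j)) ^+ 2.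

End L2.

From HB Require Import structures.
From mathcomp Require Import all_boot all_order all_algebra.
From mathcomp Require Import all_classical all_reals all_analysis.
From mathcomp Require Import ring lra.
Import Order.TTheory GRing.Theory Num.Theory.
Import measurable_realfun numFieldTopology.Exports numFieldNormedType.Exports.
Local Open Scope classical_set_scope.
Local Open Scope ring_scope.
Set Implicit Arguments. Unset Strict Implicit. Unset Printing Implicit Defensive.

(* With c_j = <f0, phi_j>, the truncation h = sum_(j < D) c_j phi_j lies in H_D and
   ||h||_{H_D}^2 = D sum_(j < D) c_j^2 <= D ||f0||^2 by Bessel's inequality.
   By Parseval, ||f0 - h||^2 = sum_(j >= D) c_j^2, and the Sobolev weights
   (j + 1)^(2 beta / d) >= (D + 1)^(2 beta / d) >= (L / eps)^2 bound it by eps^2.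
   Parseval rests on the completeness of L^2(G), proved as in Riesz-Fischer:
   a subsequence of the partial sums has summable L^1 increments, hence
   converges almost everywhere; Fatou's lemma controls the limit in L^2, and
   the basis property identifies f0 with it. *)

Section square_sums.
Variable R : realType.
Implicit Types (a : nat -> R) (B e : R).

Definition sqsum a n := \sum_(j < n) a j ^+ 2.

Definition tail_sqsum_le a D e := forall M, (D <= M)%N -> sqsum a M - sqsum a D <= e.

Lemma sqsumB a m n : (m <= n)%N ->
  sqsum a n - sqsum a m = \sum_(m <= j < n) a j ^+ 2.
Proof.
move=> mn; rewrite /sqsum -!(big_mkord xpredT (fun j => a j ^+ 2)).
by rewrite (big_cat_nat (leq0n m) mn) /= addrC addrK.
Qed.

Lemma sqsum_mono a : {homo sqsum a : m n / (m <= n)%N >-> m <= n}.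
Proof.
by move=> m n mn; rewrite -subr_ge0 sqsumB // sumr_ge0 // => j _; exact: sqr_ge0.
Qed.

Lemma sqsum_cauchy a B : (forall n, sqsum a n <= B) -> forall e, 0 < e ->
  exists N, forall D, (N <= D)%N -> tail_sqsum_le a D e.
Proof.
move=> sqsum_le e e_gt0.
have bounded : has_sup (range (sqsum a)).
  by split; [exists (sqsum a 0), 0%N | exists B => _ [n _ <-]].
have [_ [N _ <-] sup_lt] := sup_adherent e_gt0 bounded.
exists N => D ND M DM.
have : sqsum a M <= sup (range (sqsum a)) by apply: sup_upper_bound => //; exists M.
have := sqsum_mono a ND; lra.
Qed.

Lemma discriminant_le (p q r : R) : 0 <= r ->
  (forall t, 0 <= p + 2 * t * q + t ^+ 2 * r) -> q ^+ 2 <= p * r.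
Proof.
rewrite le_eqVlt => /predU1P[<-|r_gt0] quad_ge0.
  suff -> : q = 0 by rewrite expr0n mulr0.
  apply/eqP; apply: contraT => q_neq0; have := quad_ge0 (- (p + 1) / (2 * q)).
  have -> : p + 2 * (- (p + 1) / (2 * q)) * q + (- (p + 1) / (2 * q)) ^+ 2 * 0 = -1.
    by field.
  by rewrite ler0N1.
have := quad_ge0 (- q / r); rewrite -(ler_pM2r r_gt0) mul0r.
have -> : (p + 2 * (- q / r) * q + (- q / r) ^+ 2 * r) * r = p * r - q ^+ 2.
  by field; rewrite gt_eqF.
by rewrite subr_ge0.
Qed.

Lemma weighted_sqsum_tail_le (w a : nat -> R) C D M :
  (forall j, 0 <= w j) -> {homo w : i j / (i <= j)%N >-> i <= j} ->
  \sum_(j < M) w j * a j ^+ 2 <= C -> (D <= M)%N -> w D * (sqsum a M - sqsum a D) <= C.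
Proof.
move=> w_ge0 w_mono le_C DM; apply: le_trans le_C.
rewrite sqsumB // mulr_sumr -(big_mkord xpredT (fun j => w j * a j ^+ 2)).
rewrite (big_cat_nat (leq0n D) DM) /= -[X in X <= _]add0r.
apply: lerD; first by apply: sumr_ge0 => j _; rewrite mulr_ge0 ?w_ge0 ?sqr_ge0.
by apply: ler_sum_nat => j /andP[Dj _]; rewrite ler_wpM2r ?sqr_ge0 ?w_mono.
Qed.

Lemma sobolev_weight_ge (d : nat) (beta L eps : R) (D : nat) :
  (0 < d)%N -> 0 < beta -> 0 <= L -> 0 < eps -> (L / eps) `^ (d%:R / beta) <= D%:R ->
  L ^+ 2 <= D.+1%:R `^ (2 * beta / d%:R) * eps ^+ 2.
Proof.
move=> d_gt0 beta_gt0 L_ge0 eps_gt0 D_ge.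
rewrite -ler_pdivrMr ?exprn_gt0 // -expr_div_n.
have d_pos : 0 < d%:R :> R by rewrite ltr0n.
have exp_ge0 : 0 <= 2 * beta / d%:R by rewrite divr_ge0 ?mulr_ge0 ?ltW.
have D1_ge : (L / eps) `^ (d%:R / beta) <= D.+1%:R by rewrite (le_trans D_ge) ?ler_nat.
have := ge0_ler_powR exp_ge0 _ _ D1_ge; rewrite !nnegrE powR_ge0 ler0n => /(_ isT isT).
rewrite -powRrM (_ : d%:R / beta * (2 * beta / d%:R) = 2%:R); last first.
  by field; rewrite !gt_eqF.
by rewrite powR_mulrn // divr_ge0 // ltW.
Qed.

Lemma sobolev_tail_sqsum_le a (d : nat) (beta L eps : R) (D : nat) :
  (0 < d)%N -> 0 < beta -> 0 <= L -> 0 < eps ->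
  (\sum_(0 <= j <oo) ((j.+1%:R `^ (2 * beta / d%:R) * a j ^+ 2)%:E) <= (L ^+ 2)%:E)%E ->
  (L / eps) `^ (d%:R / beta) <= D%:R -> tail_sqsum_le a D (eps ^+ 2).
Proof.
move=> d_gt0 beta_gt0 L_ge0 eps_gt0 sob D_ge M DM.
pose w j := j.+1%:R `^ (2 * beta / d%:R).
have w_ge0 j : 0 <= w j by exact: powR_ge0.
have w_mono : {homo w : i j / (i <= j)%N >-> i <= j}.
  move=> i j ij; apply: ge0_ler_powR; rewrite ?nnegrE ?ler0n ?ler_nat //.
  by rewrite divr_ge0 ?mulr_ge0 ?ler0n // ltW.
have partial_le : \sum_(j < M) w j * a j ^+ 2 <= L ^+ 2.
  rewrite -lee_fin -sumEFin -(big_mkord xpredT (fun j => (w j * a j ^+ 2)%:E)).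
  apply: le_trans sob; apply: nneseries_lim_ge => j _.
  by rewrite lee_fin mulr_ge0 ?sqr_ge0.
have w_gt0 : 0 < w D by rewrite powR_gt0 ?ltr0n.
rewrite -(ler_pM2l w_gt0).
apply: le_trans (weighted_sqsum_tail_le w_ge0 w_mono partial_le DM) _.
exact: sobolev_weight_ge.
Qed.

End square_sums.

Section L2_space.
Context {dT : measure_display} {T : measurableType dT} {R : realType}.
Variable G : probability T R.
Implicit Types (f g h u v w : T -> R).
Local Notation inL2 := (inL2 G).
Local Notation "<< f , g >>" := (l2inner G f g) (format "<< f ,  g >>").

Lemma inL2_measurable f : inL2 f -> measurable_fun setT f.
Proof. by case. Qed.

Lemma inL2_integrable_sq f : inL2 f -> G.-integrable setT (EFin \o (fun x => f x ^+ 2)).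
Proof. by case. Qed.

Lemma inL2_integrable_mul f g : inL2 f -> inL2 g ->
  G.-integrable setT (EFin \o (fun x => f x * g x)).
Proof.
move=> f2 g2.
apply: (@le_integrable _ _ _ G setT measurableT _
   ((EFin \o (fun x => f x ^+ 2)) \+ (EFin \o (fun x => g x ^+ 2)))).
- by apply/measurable_EFinP; apply: measurable_funM; exact: inL2_measurable.
- move=> x _ /=; rewrite lee_fin normrM [X in _ <= X]ger0_norm ?addr_ge0 ?sqr_ge0 //.
  rewrite -[f x ^+ 2]real_normK ?num_real // -[g x ^+ 2]real_normK ?num_real //.
  by have := normr_ge0 (f x); have := normr_ge0 (g x); nra.
- by apply: (integrableD measurableT); exact: inL2_integrable_sq.
Qed.

Lemma inL2_cst k : inL2 (fun _ => k).
Proof. by split => //; exact: finite_measure_integrable_cst. Qed.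

Lemma inL2D f g : inL2 f -> inL2 g -> inL2 (fun x => f x + g x).
Proof.
move=> f2 g2; split; first by apply: measurable_funD; exact: inL2_measurable.
have fg := inL2_integrable_mul f2 g2.
apply: (eq_integrable measurableT _ _ _ (integrableD measurableT
  (integrableD measurableT (inL2_integrable_sq f2) (inL2_integrable_sq g2))
  (integrableD measurableT fg fg))).
by move=> x _ /=; rewrite -!EFinD; congr EFin; ring.
Qed.

Lemma inL2Z k f : inL2 f -> inL2 (fun x => k * f x).
Proof.
move=> f2; split; first by apply: measurable_funM => //; exact: inL2_measurable.
apply: (eq_integrable measurableT _ _ _
  (integrableZl measurableT (k ^+ 2) (inL2_integrable_sq f2))).
by move=> x _ /=; rewrite -EFinM exprMn.
Qed.

Lemma inL2B f g : inL2 f -> inL2 g -> inL2 (fun x => f x - g x).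
Proof.
move=> f2 g2; have := inL2D f2 (inL2Z (-1) g2).
by congr inL2; apply: funext => x; rewrite mulN1r.
Qed.

Lemma inL2_sum n (F : nat -> T -> R) : (forall j, inL2 (F j)) ->
  inL2 (fun x => \sum_(j < n) F j x).
Proof.
move=> F2; elim: n => [|n IHn].
  by have := inL2_cst 0; congr inL2; apply: funext => x; rewrite big_ord0.
have := inL2D IHn (F2 n); congr inL2; apply: funext => x.
by rewrite big_ord_recr.
Qed.

Lemma inL2_norm f : inL2 f -> inL2 (fun x => `|f x|).
Proof.
move=> f2; split; first by apply: measurableT_comp => //; exact: inL2_measurable.
apply: (eq_integrable measurableT _ _ _ (inL2_integrable_sq f2)).
by move=> x _ /=; rewrite real_normK ?num_real.
Qed.

Lemma inL2_integrable f : inL2 f -> G.-integrable setT (EFin \o f).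
Proof.
move=> f2; apply: (eq_integrable measurableT _ _ _ (inL2_integrable_mul f2 (inL2_cst 1))).
by move=> x _ /=; rewrite mulr1.
Qed.

Lemma l2innerC f g : <<f, g>> = <<g, f>>.
Proof. by apply: eq_Rintegral => x _; rewrite mulrC. Qed.

Lemma l2inner_ge0 f : 0 <= <<f, f>>.
Proof. by apply: Rintegral_ge0 => x _; rewrite -expr2 sqr_ge0. Qed.

Lemma l2innerDl f g h : inL2 f -> inL2 g -> inL2 h ->
  <<fun x => f x + g x, h>> = <<f, h>> + <<g, h>>.
Proof.
move=> f2 g2 h2; rewrite /l2inner -RintegralD //; try exact: inL2_integrable_mul.
by apply: eq_Rintegral => x _; rewrite mulrDl.
Qed.

Lemma l2innerBl f g h : inL2 f -> inL2 g -> inL2 h ->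
  <<fun x => f x - g x, h>> = <<f, h>> - <<g, h>>.
Proof.
move=> f2 g2 h2; rewrite /l2inner -RintegralB //; try exact: inL2_integrable_mul.
by apply: eq_Rintegral => x _; rewrite mulrBl.
Qed.

Lemma l2innerZl k f h : inL2 f -> inL2 h -> <<fun x => k * f x, h>> = k * <<f, h>>.
Proof.
move=> f2 h2; rewrite /l2inner -RintegralZl //; last exact: inL2_integrable_mul.
by apply: eq_Rintegral => x _; rewrite mulrA.
Qed.

Lemma l2inner_suml n (F : nat -> T -> R) h : (forall j, inL2 (F j)) -> inL2 h ->
  <<fun x => \sum_(j < n) F j x, h>> = \sum_(j < n) <<F j, h>>.
Proof.
move=> F2 h2; elim: n => [|n IHn].
  rewrite big_ord0 /l2inner; under eq_Rintegral do rewrite big_ord0 mul0r.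
  by rewrite Rintegral_cst // mul0r.
rewrite big_ord_recr /= -IHn -l2innerDl //; last exact: inL2_sum.
by congr l2inner; apply: funext => x; rewrite big_ord_recr.
Qed.

Lemma l2inner_sqD f g : inL2 f -> inL2 g ->
  <<fun x => f x + g x, fun x => f x + g x>> = <<f, f>> + 2 * <<f, g>> + <<g, g>>.
Proof.
move=> f2 g2; have fg2 := inL2D f2 g2.
rewrite l2innerDl // (l2innerC f) (l2innerC g) !l2innerDl // (l2innerC g f); ring.
Qed.

Lemma l2inner_sqB f g : inL2 f -> inL2 g ->
  <<fun x => f x - g x, fun x => f x - g x>> = <<f, f>> - 2 * <<f, g>> + <<g, g>>.
Proof.
move=> f2 g2; have fg2 := inL2B f2 g2.
rewrite l2innerBl // (l2innerC f) (l2innerC g) !l2innerBl // (l2innerC g f); ring.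
Qed.

Lemma l2inner_sqBC f g :
  <<fun x => f x - g x, fun x => f x - g x>> = <<fun x => g x - f x, fun x => g x - f x>>.
Proof. by apply: eq_Rintegral => x _; ring. Qed.

Lemma cauchy_schwarz f g : inL2 f -> inL2 g -> <<f, g>> ^+ 2 <= <<f, f>> * <<g, g>>.
Proof.
move=> f2 g2; apply: discriminant_le; first exact: l2inner_ge0.
move=> t; have tg2 := inL2Z t g2.
have := l2inner_ge0 (fun x => f x + t * g x).
rewrite l2inner_sqD // (l2innerC f (fun x => t * g x)) !l2innerZl //.
by rewrite (l2innerC g (fun x => t * g x)) l2innerZl // (l2innerC g f) !mulrA -expr2.
Qed.

Lemma l2inner_eq0 f g : inL2 f -> inL2 g -> <<f, f>> = 0 -> <<f, g>> = 0.
Proof.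
move=> f2 g2 ff0; apply/eqP; rewrite -sqrf_eq0 eq_le sqr_ge0 andbT.
by have := cauchy_schwarz f2 g2; rewrite ff0 mul0r.
Qed.

Lemma sqr_Rintegral_norm_le f : inL2 f -> (\int[G]_(x in setT) `|f x|) ^+ 2 <= <<f, f>>.
Proof.
move=> f2; have := cauchy_schwarz (inL2_norm f2) (inL2_cst 1).
have G1 : fine (G setT) = 1 by rewrite probability_setT.
rewrite /l2inner Rintegral_cst // G1 !mulr1.
under eq_Rintegral do rewrite mulr1.
have normK x : `|f x| * `|f x| = f x * f x.
  by rewrite -normrM ger0_norm // -expr2 sqr_ge0.
by under [X in _ <= X -> _]eq_Rintegral do rewrite normK.
Qed.

Lemma EFin_Rintegral f : G.-integrable setT (EFin \o f) ->
  (\int[G]_(x in setT) f x)%:E = (\int[G]_(x in setT) (f x)%:E)%E.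
Proof. by move=> f1; rewrite fineK //; exact: integrable_fin_num. Qed.

Lemma fatou_l2_integral_le (u : (T -> R)^nat) w (Z : set T) (B : R) :
  measurable Z -> G Z = 0%E -> measurable_fun setT w ->
  (forall m, inL2 (u m)) -> (forall x, ~ Z x -> u ^~ x @ \oo --> w x) ->
  (\forall m \near \oo, <<u m, u m>> <= B) ->
  (\int[G]_(x in setT) (w x * w x)%:E <= B%:E)%E.
Proof.
move=> mZ GZ0 mw u2 u_cvg [m0 _ uB].
pose sq (v : T -> R) x := (v x * v x)%:E.
have msq v : measurable_fun setT v -> measurable_fun setT (sq v).
  by move=> mv; apply/measurable_EFinP; exact: measurable_funM.
have sq_ge0 v x : (0 <= sq v x)%E by rewrite lee_fin -expr2 sqr_ge0.
rewrite (ge0_negligible_integral mZ measurableT (msq _ mw)) //.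
rewrite (eq_integral (fun x => limn_einf (fun m => sq (u m) x))); last first.
  move=> x; rewrite inE => -[_ /= nZx]; symmetry; apply: (cvg_limn_einf_sup _).1.
  by apply: cvg_EFin; [exact: nearW | apply: cvgM; exact: u_cvg].
apply: le_trans (fatou _ (measurableD measurableT mZ) _ _) _.
- by move=> m; apply: measurable_funS (msq _ (inL2_measurable (u2 m))).
- by move=> m x _; exact: sq_ge0.
rewrite limn_einf_lim; apply: lime_le; first exact: is_cvg_einfs.
exists m0 => // m /= m0m.
apply: (@le_trans _ _ (\int[G]_(x in setT `\` Z) sq (u m) x)%E).
  by apply: ereal_inf_lbound; exists m => /=.
apply: (@le_trans _ _ (\int[G]_(x in setT) sq (u m) x)%E).
  apply: ge0_subset_integral => //; first exact: measurableD.
  exact: msq (inL2_measurable (u2 m)).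
have <- := EFin_Rintegral (inL2_integrable_mul (u2 m) (u2 m)).
by rewrite lee_fin uB.
Qed.

Lemma fatou_l2 (u : (T -> R)^nat) w (Z : set T) (B : R) :
  measurable Z -> G Z = 0%E -> measurable_fun setT w ->
  (forall m, inL2 (u m)) -> (forall x, ~ Z x -> u ^~ x @ \oo --> w x) ->
  (\forall m \near \oo, <<u m, u m>> <= B) -> inL2 w /\ <<w, w>> <= B.
Proof.
move=> mZ GZ0 mw u2 u_cvg uB.
have ww_le := fatou_l2_integral_le mZ GZ0 mw u2 u_cvg uB.
have w2 : inL2 w.
  split => //; apply/integrableP; split.
    by apply/measurable_EFinP; exact: measurable_funX.
  under eq_integral do rewrite gee0_abs ?lee_fin ?sqr_ge0 //.
  exact: le_lt_trans ww_le (ltry _).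
by split => //; rewrite -lee_fin EFin_Rintegral //; exact: inL2_integrable_mul.
Qed.

End L2_space.

Section orthonormal_basis.
Context {dT : measure_display} {T : measurableType dT} {R : realType}.
Variables (G : probability T R) (phi : nat -> T -> R).
Hypothesis phi_ONB : is_ONB G phi.
Implicit Types (f g h : T -> R) (a : nat -> R).
Local Notation inL2 := (inL2 G).
Local Notation "<< f , g >>" := (l2inner G f g) (format "<< f ,  g >>").

Definition phi_sum a n x := \sum_(j < n) a j * phi j x.

Definition coef f j := <<f, phi j>>.

Lemma inL2_phi j : inL2 (phi j).
Proof. by case: phi_ONB. Qed.

Lemma l2inner_phi i j : <<phi i, phi j>> = (i == j)%:R.
Proof. by case: phi_ONB. Qed.

#[local] Hint Resolve inL2_phi : core.

Lemma inL2_phi_term a j : inL2 (fun x => a j * phi j x).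
Proof. exact/inL2Z/inL2_phi. Qed.

Lemma inL2_phi_sum a n : inL2 (phi_sum a n).
Proof. exact: (inL2_sum _ (inL2_phi_term a)). Qed.
#[local] Hint Resolve inL2_phi_sum : core.

Lemma coef_phi_sum a n k : coef (phi_sum a n) k = if (k < n)%N then a k else 0.
Proof.
rewrite /coef /phi_sum (l2inner_suml _ (inL2_phi_term a) (inL2_phi k)).
rewrite -(@big_ord1_eq R 0 +%R a k n) [RHS]big_mkcond /=; apply: eq_bigr => j _.
by rewrite l2innerZl // l2inner_phi; case: eqP; rewrite ?mulr1 ?mulr0.
Qed.

Lemma l2inner_phi_sums a n m : (n <= m)%N ->
  <<phi_sum a m, phi_sum a n>> = sqsum a n.
Proof.
move=> nm; rewrite l2innerC /phi_sum (l2inner_suml _ (inL2_phi_term a) (inL2_phi_sum a m)).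
apply: eq_bigr => j _; rewrite l2innerZl // l2innerC.
by have := coef_phi_sum a m j; rewrite /coef => ->; rewrite (leq_trans (ltn_ord j) nm) expr2.
Qed.

Lemma l2inner_phi_sumB a n m : (n <= m)%N ->
  <<fun x => phi_sum a m x - phi_sum a n x, fun x => phi_sum a m x - phi_sum a n x>> =
  sqsum a m - sqsum a n.
Proof.
move=> nm; rewrite l2inner_sqB // !l2inner_phi_sums //; ring.
Qed.

Lemma l2inner_phi_sum_coef f n : inL2 f -> <<f, phi_sum (coef f) n>> = sqsum (coef f) n.
Proof.
move=> f2; rewrite l2innerC /phi_sum (l2inner_suml _ (inL2_phi_term _) f2).
by apply: eq_bigr => j _; rewrite l2innerZl // l2innerC expr2.
Qed.

Lemma l2inner_sub_phi_sum f n : inL2 f ->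
  <<fun x => f x - phi_sum (coef f) n x, fun x => f x - phi_sum (coef f) n x>> =
  <<f, f>> - sqsum (coef f) n.
Proof.
move=> f2; rewrite l2inner_sqB // l2inner_phi_sum_coef //.
by rewrite l2inner_phi_sums //; ring.
Qed.

Lemma bessel f n : inL2 f -> sqsum (coef f) n <= <<f, f>>.
Proof. by move=> f2; rewrite -subr_ge0 -l2inner_sub_phi_sum //; exact: l2inner_ge0. Qed.

Lemma HDnorm2_phi_sum a D : HDnorm2 G phi D (phi_sum a D) = D%:R * sqsum a D.
Proof.
congr (_ * _); apply: eq_bigr => j _.
by have := coef_phi_sum a D j; rewrite /coef => ->; rewrite ltn_ord.
Qed.

Section riesz_fischer.
Variables (a : nat -> R) (B : R).
Hypothesis sqsum_le : forall n, sqsum a n <= B.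

Let rate k : R := 2^-1 ^+ k.

Let rate_gt0 k : 0 < rate k.
Proof. by rewrite exprn_gt0 // invr_gt0. Qed.

Let sum_rate_le n : \sum_(k < n) rate k <= 2.
Proof.
suff <- : \sum_(k < n) rate k + 2 * rate n = 2 by rewrite lerDl mulr_ge0 ?ltW.
elim: n => [|n IHn]; first by rewrite big_ord0 add0r /rate expr0 mulr1.
by rewrite big_ord_recr /= -[RHS]IHn -addrA /rate exprS; congr (_ + _); field.
Qed.

Section subsequence.
Variable N : nat -> nat.
Hypothesis tail_le : forall k D, (N k <= D)%N -> tail_sqsum_le a D (rate k ^+ 2).

Let n k := \sum_(i < k.+1) (N i).+1.

Let nS k : n k.+1 = (n k + (N k.+1).+1)%N.
Proof. by rewrite /n big_ord_recr. Qed.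

Let n_mono : {homo n : k l / (k <= l)%N}.
Proof. by apply: homo_leq => [//|k l m|k]; [exact: leq_trans | rewrite nS leq_addr]. Qed.

Let N_le_n k : (N k <= n k)%N.
Proof.
case: k => [|k]; first by rewrite /n big_ord1.
by rewrite nS (leq_trans (leqnSn _)) // leq_addl.
Qed.

Let lt_n k : (k < n k)%N.
Proof.
by elim: k => [|k IHk]; rewrite ?nS /n ?big_ord1 // addnS ltnS (leq_trans IHk) ?leq_addr.
Qed.

Let S k := phi_sum a (n k).

Let dS k x := `|S k.+1 x - S k x|.

Let measurable_dS k : measurable_fun setT (dS k).
Proof.
apply: measurableT_comp => //.
by apply: measurable_funB; exact: inL2_measurable (inL2_phi_sum _ _).
Qed.

Let Rintegral_dS_le k : \int[G]_(x in setT) dS k x <= rate k.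
Proof.
have := sqr_Rintegral_norm_le (inL2B (inL2_phi_sum a (n k.+1)) (inL2_phi_sum a (n k))).
rewrite l2inner_phi_sumB ?n_mono // => sq_le.
have := tail_le (N_le_n k) (n_mono (leqnSn k)).
have : 0 <= \int[G]_(x in setT) dS k x by apply: Rintegral_ge0 => x _; exact: normr_ge0.
have := rate_gt0 k; rewrite /dS; nra.
Qed.

Let F x := (\sum_(k <oo) (dS k x)%:E)%E.

Let F_integrable : G.-integrable setT F.
Proof.
have dS_ge0 k x : (0 <= (dS k x)%:E)%E by rewrite lee_fin normr_ge0.
apply/integrableP; split.
  by apply: ge0_emeasurable_sum => // k _; apply/measurable_EFinP; exact: measurable_dS.
under eq_integral do rewrite gee0_abs ?nneseries_ge0 //.
rewrite integral_nneseries //; last by move=> k; apply/measurable_EFinP; exact: measurable_dS.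
apply: le_lt_trans (ltry 2%R); apply: lime_le.
  by apply: is_cvg_nneseries => k _ _; exact: integral_ge0.
apply: nearW => m; rewrite /= big_mkord.
apply: (@le_trans _ _ (\sum_(k < m) (rate k)%:E)%E); last first.
  by rewrite sumEFin lee_fin sum_rate_le.
apply: lee_sum => k _; rewrite -EFin_Rintegral ?lee_fin ?Rintegral_dS_le //.
exact: inL2_integrable (inL2_norm (inL2B (inL2_phi_sum _ _) (inL2_phi_sum _ _))).
Qed.

Section null_set.
Variable Z : set T.
Hypotheses (mZ : measurable Z) (GZ0 : G Z = 0%E) (F_fin : forall x, ~ Z x -> (F x < +oo)%E).

Let S_cvg x : ~ Z x -> cvgn (S ^~ x).
Proof.
move=> nZx; pose u k := S k.+1 x - S k x.
have -> : S ^~ x = (fun k => S 0 x + series u k).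
  by apply: funext => k; rewrite /series /= telescope_sumr // addrC subrK.
apply: is_cvgD; first exact: is_cvg_cst.
by apply/normed_cvg/nnseries_is_cvg => [k|]; [exact: normr_ge0 | exact: F_fin].
Qed.

(* The indicator makes the sequence converge everywhere, so that g is measurable. *)
Let g x := limn (fun k => \1_(~` Z) x * S k x).

Let indic_S_cvg x : (fun k => \1_(~` Z) x * S k x) @ \oo --> g x.
Proof.
rewrite /g indicE; have [/set_mem nZx|_] := boolP (x \in ~` Z).
  exact: is_cvgM (is_cvg_cst _) (S_cvg nZx).
under eq_fun do rewrite mul0r.
exact: is_cvg_cst.
Qed.

Let S_cvg_g x : ~ Z x -> S ^~ x @ \oo --> g x.
Proof.
move=> nZx; have := @indic_S_cvg x.
by rewrite indicE mem_set //; under eq_fun do rewrite mul1r.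
Qed.

Let measurable_g : measurable_fun setT g.
Proof.
apply: (measurable_fun_cvg _ (fun x _ => @indic_S_cvg x)) => k.
apply: measurable_funM; first exact/measurable_indic/measurableC.
exact: inL2_measurable (inL2_phi_sum _ _).
Qed.

Let g_tail D e : tail_sqsum_le a D e ->
  inL2 (fun x => g x - phi_sum a D x) /\
  <<fun x => g x - phi_sum a D x, fun x => g x - phi_sum a D x>> <= e.
Proof.
move=> tail; apply: (fatou_l2 (u := fun m x => S m x - phi_sum a D x) mZ GZ0).
- by apply: measurable_funB => //; exact: inL2_measurable (inL2_phi_sum _ _).
- by move=> m; exact: inL2B (inL2_phi_sum _ _) (inL2_phi_sum _ _).
- by move=> x nZx; apply: cvgB (@S_cvg_g x nZx) (cvg_cst _).
exists D => // m /= Dm; have Dn : (D <= n m)%N := leq_trans Dm (ltnW (lt_n m)).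
by rewrite l2inner_phi_sumB //; exact: tail.
Qed.

Lemma riesz_fischer_null : exists g, inL2 g /\ forall D e, tail_sqsum_le a D e ->
  <<fun x => g x - phi_sum a D x, fun x => g x - phi_sum a D x>> <= e.
Proof.
exists g; split => [|D e /g_tail[] //].
have tail M : (0 <= M)%N -> sqsum a M - sqsum a 0 <= B.
  by rewrite [sqsum a 0]big_ord0 subr0.
have [+ _] := g_tail tail.
by congr inL2; apply: funext => x; rewrite /phi_sum big_ord0 subr0.
Qed.

End null_set.

Lemma riesz_fischer_subseq : exists g, inL2 g /\ forall D e, tail_sqsum_le a D e ->
  <<fun x => g x - phi_sum a D x, fun x => g x - phi_sum a D x>> <= e.
Proof.
have [Z [mZ GZ0 F_fin]] := integrable_ae measurableT F_integrable.
apply: (riesz_fischer_null mZ GZ0) => x nZx.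
rewrite -ge0_fin_numE; last by apply: nneseries_ge0 => k _ _; rewrite lee_fin normr_ge0.
by apply: contrapT => Fx; apply: nZx; apply: F_fin => /(_ I).
Qed.

End subsequence.

Theorem riesz_fischer : exists g, inL2 g /\ forall D e, tail_sqsum_le a D e ->
  <<fun x => g x - phi_sum a D x, fun x => g x - phi_sum a D x>> <= e.
Proof.
have /choice[N tail_le] k : exists N, forall D, (N <= D)%N -> tail_sqsum_le a D (rate k ^+ 2).
  by apply: sqsum_cauchy sqsum_le _ _; rewrite exprn_gt0.
exact: riesz_fischer_subseq tail_le.
Qed.

End riesz_fischer.

Lemma coef_of_phi_sum_approx a B g : (forall n, sqsum a n <= B) -> inL2 g ->
  (forall D e, tail_sqsum_le a D e ->
    <<fun x => g x - phi_sum a D x, fun x => g x - phi_sum a D x>> <= e) ->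
  forall j, coef g j = a j.
Proof.
move=> sqsum_le g2 g_tail j; apply/eqP; rewrite -subr_eq0 -sqrf_eq0 eq_le sqr_ge0 andbT.
apply/ler_addgt0Pr => e e_gt0; rewrite add0r.
have [D0 tail] := sqsum_cauchy sqsum_le e_gt0; pose D := maxn D0 j.+1.
have gD2 := inL2B g2 (inL2_phi_sum a D).
have -> : coef g j - a j = <<fun x => g x - phi_sum a D x, phi j>>.
  rewrite l2innerBl //; have := coef_phi_sum a D j; rewrite /coef => ->.
  by rewrite leq_max ltnSn orbT.
apply: le_trans (cauchy_schwarz gD2 (inL2_phi j)) _.
by rewrite l2inner_phi eqxx mulr1; apply: g_tail; apply: tail; exact: leq_maxl.
Qed.

Lemma coef0_l2inner0 f : inL2 f -> (forall j, coef f j = 0) -> <<f, f>> = 0.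
Proof.
move=> f2 coef0; case: phi_ONB => _ _ /(_ _ f2 coef0)/eqP; rewrite sqrtr_eq0 => ff_le0.
by apply/eqP; rewrite eq_le ff_le0 l2inner_ge0.
Qed.

Lemma l2inner_sub_phi_sum_le f D e : inL2 f -> tail_sqsum_le (coef f) D e ->
  <<fun x => f x - phi_sum (coef f) D x, fun x => f x - phi_sum (coef f) D x>> <= e.
Proof.
move=> f2 tail; have bessel_f n := bessel n f2.
have [g [g2 g_tail]] := riesz_fischer bessel_f.
have coef_g := coef_of_phi_sum_approx bessel_f g2 g_tail.
have fg2 := inL2B f2 g2; have gS2 := inL2B g2 (inL2_phi_sum (coef f) D).
have fg0 : <<fun x => f x - g x, fun x => f x - g x>> = 0.
  apply: (coef0_l2inner0 fg2) => j; rewrite /coef l2innerBl //.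
  by have := coef_g j; rewrite /coef => ->; rewrite subrr.
have -> : (fun x => f x - phi_sum (coef f) D x) =
          (fun x => (f x - g x) + (g x - phi_sum (coef f) D x)).
  by apply: funext => x; rewrite addrA subrK.
rewrite l2inner_sqD // fg0 (l2inner_eq0 fg2 gS2 fg0) mulr0 !add0r.
exact: g_tail.
Qed.

End orthonormal_basis.

Theorem lemma11 (dT : measure_display) (T : measurableType dT) (R : realType)
    (G : probability T R) (phi : nat -> T -> R) (d : nat) (beta L : R)
    (eps : R) (f0 : T -> R) (D : nat) :
  (0 < d)%N -> 0 < beta -> 0 < L ->
  is_ONB G phi ->
  0 < eps ->
  sobolev_ball G phi d beta L f0 ->
  (L / eps) `^ (d%:R / beta) <= D%:R ->
  (ereal_inf [set (HDnorm2 G phi D h)%:E | h in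
                [set h | inHD phi D h /\ (l2norm G (fun x => h x - f0 x) <= eps)%R]]
   <= (D%:R * (l2norm G f0) ^+ 2)%:E)%E.
Proof.
move=> d_gt0 beta_gt0 L_gt0 phi_ONB eps_gt0 [f0_L2 f0_sob] D_ge.
pose c := coef G phi f0; pose h := phi_sum phi c D.
have tail : tail_sqsum_le c D (eps ^+ 2).
  exact: sobolev_tail_sqsum_le d_gt0 beta_gt0 (ltW L_gt0) eps_gt0 f0_sob D_ge.
apply: (@le_trans _ _ (HDnorm2 G phi D h)%:E).
  apply: ereal_inf_lbound; exists h => //; split; first by exists c.
  rewrite /l2norm l2inner_sqBC -(ger0_norm (ltW eps_gt0)) -sqrtr_sqr ler_sqrt ?sqr_ge0 //.
  exact: (l2inner_sub_phi_sum_le phi_ONB f0_L2 tail).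
rewrite lee_fin HDnorm2_phi_sum // ler_wpM2l // /l2norm sqr_sqrtr ?l2inner_ge0 //.
exact: bessel.
Qed.
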